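(* Let $J=S\Upsilon_1S^{-1}=\bar S\Upsilon_2^\top\bar S^{-1}$. Then for $a=1,\dots,p_1$, $b=1,\dots,p_2$, $$J\mathcal A_a(z)=z\mathcal A_a(z),\quad J^\top\bar{\mathcal A}_b(z)=z\bar{\mathcal A}_b(z),\quad J\mathcal C_b(z)=z\mathcal C_b(z)-c_b,\quad J^\top\bar{\mathcal C}_a(z)=z\bar{\mathcal C}_a(z)-\bar c_a .$$
   Context: Setting: $\mu$ finite Borel measure on an interval, weights $w_{1,a}$ ($a\le p_1$), $w_{2,b}$ ($b\le p_2$), compositions $\vec n_\ell\in\mathbb N^{p_\ell}$; each $i\in\mathbb Z_+$ is uniquely $i=q|\vec n_\ell|+n_{\ell,1}+\dots+n_{\ell,a-1}+r$ ($0\le r<n_{\ell,a}$), $a_\ell(i)=a$, $k_\ell(i)=qn_{\ell,a}+r$; moment matrix $g_{i,j}=\int x^{k_1(i)+k_2(j)}w_{1,a_1(i)}w_{2,a_2(j)}d\mu$, assumed to have Gauss–Borel factorization $g=S^{-1}\bar S$ ($S$ unit lower triangular, $\bar S$ upper triangular invertible). $e_{\ell,a}(k)=e_i$ with $a_\ell(i)=a,k_\ell(i)=k$; $\Lambda_{\ell,a}=\sum_ke_{\ell,a}(k)e_{\ell,a}(k+1)^\top$, $\Upsilon_\ell=\sum_a\Lambda_{\ell,a}$. $\chi_{\ell,a}(z)=\sum_ke_{\ell,a}(k)z^k$ and $\chi^*_{\ell,a}(z)=z^{-1}\chi_{\ell,a}(z^{-1})$. Strings of polynomials $\mathcal A_a=S\chi_{1,a}$,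 $\bar{\mathcal A}_b=(\bar S^{-1})^\top\chi_{2,b}$; strings of second kind functions (formal series in $z^{-1}$) $\mathcal C_b=\bar S\chi^*_{2,b}(z)$, $\bar{\mathcal C}_a=(S^{-1})^\top\chi^*_{1,a}(z)$; vectors $c_b=\bar Se_{2,b}(0)$, $\bar c_a=(S^{-1})^\top e_{1,a}(0)$. *)

From HB Require Import structures.
From mathcomp Require Import all_boot all_order all_algebra.
From mathcomp Require Import all_classical all_reals all_analysis.
Set Implicit Arguments. Unset Strict Implicit. Unset Printing Implicit Defensive.
Import Order.TTheory GRing.Theory Num.Theory.
Local Open Scope classical_set_scope.
Local Open Scope ring_scope.

(* A composition is a seq nat of positive entries; component a (paper: a+1) is  *)
(* 0-based here.  For i = q|n| + n_1+...+n_{a-1} + r, 0 <= r < n_a:             *)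
Definition composition (n : seq nat) : Prop := (0 < size n)%N /\ all (fun m => 0 < m)%N n.

Definition aidx (n : seq nat) (i : nat) : nat :=
  let r := (i %% sumn n)%N in
  find (fun a => r < sumn (take a.+1 n))%N (iota 0 (size n)).

Definition kidx (n : seq nat) (i : nat) : nat :=
  let q := (i %/ sumn n)%N in
  let a := aidx n i in
  (q * nth 0 n a + (i %% sumn n - sumn (take a n)))%N.

Section SemiInfinite.
Variable R : realType.

(* semi-infinite matrices, vectors, and vectors of formal Laurent series       *)
(* (a series is given by its coefficient function: coefficient of z^m, m : int)*)
Definition mx := nat -> nat -> R.
Definition vec := nat -> R.
Definition svec := nat -> int -> R.

(* products: sums over the (finite, in all uses below) support *)
Definition mmul (A B : mx) : mx := fun i j => \sum_(k \in [set: nat]) A i k * B k j.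
Definition trm (A : mx) : mx := fun i j => A j i.
Definition idmx : mx := fun i j => (i == j)%:R.
Definition mvs (A : mx) (v : svec) : svec := fun i m => \sum_(l \in [set: nat]) A i l * v l m.
Definition zmul (v : svec) : svec := fun i m => v i (m - 1).
Definition cstv (c : vec) : svec := fun i m => if m == 0 then c i else 0.
Definition subs (v w : svec) : svec := fun i m => v i m - w i m.

(* Upsilon_l = sum_a Lambda_{l,a}, Lambda_{l,a} = sum_k e_{l,a}(k) e_{l,a}(k+1)^T *)
Definition Lambda (n : seq nat) (a : nat) : mx := fun i j =>
  if [&& aidx n i == a, aidx n j == a & kidx n j == (kidx n i).+1] then 1 else 0.
Definition Upsilon (n : seq nat) : mx := fun i j =>
  \sum_(a < size n) Lambda n a i j.

(* chi_{l,a}(z) = sum_k e_{l,a}(k) z^k *)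
Definition chi (n : seq nat) (a : nat) : svec := fun i m =>
  if (aidx n i == a) && (m == Posz (kidx n i)) then 1 else 0.
(* chi*_{l,a}(z) = z^{-1} chi_{l,a}(z^{-1}) = sum_k e_{l,a}(k) z^{-k-1} *)
Definition chistar (n : seq nat) (a : nat) : svec := fun i m =>
  if (aidx n i == a) && (m == - Posz (kidx n i).+1) then 1 else 0.
Definition e0 (n : seq nat) (a : nat) : vec := fun i =>
  if (aidx n i == a) && (kidx n i == 0)%N then 1 else 0.

Definition mvr (A : mx) (v : vec) : vec := fun i => \sum_(l \in [set: nat]) A i l * v l.

Definition lower_unitriangular (S : mx) : Prop :=
  (forall i j, (i < j)%N -> S i j = 0) /\ (forall i, S i i = 1).
Definition lower_triangular (S : mx) : Prop := forall i j, (i < j)%N -> S i j = 0.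
Definition upper_triangular (S : mx) : Prop := forall i j, (j < i)%N -> S i j = 0.

End SemiInfinite.

From HB Require Import structures.
From mathcomp Require Import all_boot all_order all_algebra.
From mathcomp Require Import all_classical all_reals all_analysis.
From mathcomp Require Import zify.
Set Implicit Arguments. Unset Strict Implicit. Unset Printing Implicit Defensive.
Import Order.TTheory GRing.Theory Num.Theory.
Local Open Scope classical_set_scope.
Local Open Scope ring_scope.

(* The shift [Upsilon_1] raises [k_1(i)] by one and [Upsilon_2^T] acting on
   the right raises [k_2(j)] by one; since the moment matrix [g] depends only
   on [a_1(i), a_2(j)] and [k_1(i) + k_2(j)], it is block Hankel:
   [Upsilon_1 g = g Upsilon_2^T].  Writing [g = S^-1 Sb] this gives
   [S Upsilon_1 S^-1 = Sb Upsilon_2^T Sb^-1].  The eigen-relations then follow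
   by conjugating [Upsilon_1 chi_{1,a} = z chi_{1,a}] and
   [Upsilon_2^T chi*_{2,b} = z chi*_{2,b} - e_{2,b}(0)] (and their transposes).
   Products of semi-infinite matrices are only associative under finiteness
   conditions; these are supplied by triangularity: lower triangular matrices
   have finite rows, upper triangular ones finite columns. *)

Section CompositionIndex.
Variable n : seq nat.
Hypothesis n_composition : composition n.
Local Notation pre a := (sumn (take a n)).

Lemma sumn_take_mono a b : (a <= b)%N -> (pre a <= pre b)%N.
Proof. by move=> le_ab; rewrite -(subnKC le_ab) takeD sumn_cat leq_addr. Qed.

Lemma composition_nth_gt0 a : (a < size n)%N -> (0 < nth 0 n a)%N.
Proof. by case: n_composition => _ /all_nthP; apply. Qed.

Lemma sumn_takeS a : (a < size n)%N -> pre a.+1 = (pre a + nth 0 n a)%N.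
Proof. by move=> lt_a; rewrite (take_nth 0 lt_a) -cats1 sumn_cat /= addn0. Qed.

Lemma composition_sumn_gt0 : (0 < sumn n)%N.
Proof. by case: n_composition; case: n => //= m s _ /andP[m_gt0 _]; apply: ltn_addr. Qed.

Lemma aidx_lt i : (aidx n i < size n)%N.
Proof.
rewrite /aidx -[X in (_ < X)%N](size_iota 0) -has_find; apply/hasP.
case: n_composition => /prednK n_size _; exists (size n).-1.
  by rewrite mem_iota add0n n_size leqnn.
by rewrite n_size take_size ltn_pmod // composition_sumn_gt0.
Qed.

Lemma aidx_bounds i : (pre (aidx n i) <= i %% sumn n < pre (aidx n i).+1)%N.
Proof.
set P := fun a => (i %% sumn n < pre a.+1)%N.
have def_a : find P (iota 0 (size n)) = aidx n i := erefl.
have lt_a := aidx_lt i.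
have has_P : has P (iota 0 (size n)) by rewrite has_find def_a size_iota.
have := nth_find 0 has_P; rewrite def_a nth_iota // add0n /P => ->.
rewrite andbT; case E: (aidx n i) => [|a]; first by rewrite take0.
have := @before_find _ 0 P (iota 0 (size n)) a.
rewrite def_a E ltnSn nth_iota ?add0n /P; last by rewrite ltnW // -E.
by move=> not_lt; rewrite leqNgt not_lt.
Qed.

Lemma aidx_unique i a : (pre a <= i %% sumn n < pre a.+1)%N -> aidx n i = a.
Proof.
move=> /andP[ge_a lt_a]; have /andP[ge_i lt_i] := aidx_bounds i.
case: (ltngtP (aidx n i) a) => // lt_ai.
  by have := leq_ltn_trans (leq_trans (sumn_take_mono lt_ai) ge_a) lt_i; rewrite ltnn.
by have := leq_ltn_trans (leq_trans (sumn_take_mono lt_ai) ge_i) lt_a; rewrite ltnn.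
Qed.

(* [e_{l,a}(k) = e_(epos a k)] in the notation of the paper. *)
Definition epos a k := (k %/ nth 0 n a * sumn n + pre a + k %% nth 0 n a)%N.

Lemma epos_divmod a k : (a < size n)%N ->
  (epos a k %% sumn n = pre a + k %% nth 0 n a)%N /\
  (epos a k %/ sumn n = k %/ nth 0 n a)%N.
Proof.
move=> lt_a; have lt_rem : (pre a + k %% nth 0 n a < sumn n)%N.
  apply: (@leq_trans (pre a.+1)).
    by rewrite sumn_takeS // ltn_add2l ltn_pmod // composition_nth_gt0.
  by rewrite -{2}(cat_take_drop a.+1 n) sumn_cat leq_addr.
rewrite /epos -addnA; split; first by rewrite modnMDl modn_small.
by rewrite divnMDl ?composition_sumn_gt0 // (divn_small lt_rem) addn0.
Qed.

Lemma aidx_epos a k : (a < size n)%N -> aidx n (epos a k) = a.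
Proof.
move=> lt_a; apply: aidx_unique; have [-> _] := epos_divmod k lt_a.
by rewrite leq_addr sumn_takeS // ltn_add2l ltn_pmod // composition_nth_gt0.
Qed.

Lemma kidx_epos a k : (a < size n)%N -> kidx n (epos a k) = k.
Proof.
move=> lt_a; rewrite /kidx aidx_epos //; have [-> ->] := epos_divmod k lt_a.
by rewrite addKn -divn_eq.
Qed.

Lemma epos_idx i : epos (aidx n i) (kidx n i) = i.
Proof.
have /andP[ge_i lt_i] := aidx_bounds i.
have n_gt0 := composition_nth_gt0 (aidx_lt i).
have lt_r : (i %% sumn n - pre (aidx n i) < nth 0 n (aidx n i))%N.
  by rewrite ltn_subLR // -sumn_takeS // aidx_lt.
rewrite /epos /kidx divnMDl // (divn_small lt_r) addn0 modnMDl (modn_small lt_r).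
by rewrite -addnA subnKC // -divn_eq.
Qed.

Lemma eq_epos a k j :
  (a < size n)%N -> (j == epos a k) = (aidx n j == a) && (kidx n j == k).
Proof.
move=> lt_a; apply/eqP/andP => [->|[/eqP <- /eqP <-]]; last by rewrite epos_idx.
by rewrite aidx_epos // kidx_epos.
Qed.

Definition esucc i := epos (aidx n i) (kidx n i).+1.

Lemma aidx_esucc i : aidx n (esucc i) = aidx n i.
Proof. exact/aidx_epos/aidx_lt. Qed.

Lemma kidx_esucc i : kidx n (esucc i) = (kidx n i).+1.
Proof. exact/kidx_epos/aidx_lt. Qed.

End CompositionIndex.

Lemma fsum_nat_ord (R : nmodType) (F : nat -> R) N :
  (forall k, (N <= k)%N -> F k = 0) -> \sum_(k \in [set: nat]) F k = \sum_(k < N) F k.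
Proof.
move=> F0; rewrite fsbig_ord; apply/esym/fsbig_widen => // k [_ /negP].
by rewrite -leqNgt => /F0.
Qed.

Lemma fsum_nat1 (R : nmodType) (F : nat -> R) k0 :
  (forall k, k != k0 -> F k = 0) -> \sum_(k \in [set: nat]) F k = F k0.
Proof.
move=> F0; rewrite (@fsum_nat_ord _ _ k0.+1) => [|k lt_k]; last first.
  by apply: F0; rewrite neq_ltn ltnNge lt_k orbT.
by rewrite big_ord_recr /= big1 ?add0r // => k _; apply: F0; rewrite neq_ltn ltn_ord.
Qed.

Section SemiInfiniteProducts.
Variable R : realType.

(* [mmul] and [mvs] are the instances [T = nat] and [T = int]. *)
Definition mxmul (T : Type) (A : mx R) (C : nat -> T -> R) : nat -> T -> R :=
  fun i j => \sum_(l \in [set: nat]) A i l * C l j.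

Definition row_finite (A : mx R) :=
  exists f : nat -> nat, forall i l, (f i <= l)%N -> A i l = 0.
Definition col_finite (T : Type) (C : nat -> T -> R) :=
  exists f : T -> nat, forall k j, (f j <= k)%N -> C k j = 0.

Lemma lower_triangular_row_finite (A : mx R) : lower_triangular A -> row_finite A.
Proof. by move=> A_low; exists succn => i l; apply: A_low. Qed.

Lemma upper_triangular_col_finite (A : mx R) : upper_triangular A -> col_finite A.
Proof. by move=> A_up; exists succn => i l; apply: A_up. Qed.

Lemma row_finite_trm (A : mx R) : col_finite A -> row_finite (trm A).
Proof. by case=> f A0; exists f => i l; apply: A0. Qed.

Lemma col_finite_trm (A : mx R) : row_finite A -> col_finite (trm A).
Proof. by case=> f A0; exists f => i l; apply: A0. Qed.

Lemma mxmulA_bounded (T : Type) (A B : mx R) (C : nat -> T -> R) i j N1 N2 :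
  (forall l k, (N1 <= l)%N || (N2 <= k)%N -> A i l * B l k * C k j = 0) ->
  mxmul (mxmul A B) C i j = mxmul A (mxmul B C) i j.
Proof.
move=> ABC0; rewrite /mxmul.
under eq_fsbigr do rewrite mulr_fsuml.
under [RHS]eq_fsbigr do rewrite mulr_fsumr.
have sum_l k : \sum_(l \in [set: nat]) A i l * B l k * C k j
             = \sum_(l < N1) A i l * B l k * C k j.
  by apply: fsum_nat_ord => l le_l; rewrite ABC0 ?le_l.
have sum_k l : \sum_(k \in [set: nat]) A i l * (B l k * C k j)
             = \sum_(k < N2) A i l * (B l k * C k j).
  by apply: fsum_nat_ord => k le_k; rewrite mulrA ABC0 ?le_k ?orbT.
rewrite (@fsum_nat_ord _ _ N2) => [|k le_k]; last first.
  by rewrite sum_l big1 // => l _; rewrite ABC0 ?le_k ?orbT.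
rewrite [RHS](@fsum_nat_ord _ _ N1) => [|l le_l]; last first.
  by rewrite sum_k big1 // => k _; rewrite mulrA ABC0 ?le_l.
under eq_bigr do rewrite sum_l.
under [RHS]eq_bigr do rewrite sum_k.
by rewrite exchange_big; apply: eq_bigr => k _; apply: eq_bigr => l _; rewrite mulrA.
Qed.

Lemma leq_bigmax_ord N (f : nat -> nat) l : (l < N)%N -> (f l <= \max_(l0 < N) f l0)%N.
Proof. by move=> lt_l; apply: (@leq_bigmax _ (fun l0 : 'I_N => f l0) (Ordinal lt_l)). Qed.

Lemma mxmulA_row_col (T : Type) (A B : mx R) (C : nat -> T -> R) :
  row_finite A -> col_finite C -> mxmul (mxmul A B) C = mxmul A (mxmul B C).
Proof.
move=> [fA A0] [fC C0]; apply/funext => i; apply/funext => j.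
apply: (@mxmulA_bounded _ _ _ _ _ _ (fA i) (fC j)) => l k /orP[/(A0 i) ->|/C0 ->].
  by rewrite !mul0r.
by rewrite mulr0.
Qed.

Lemma mxmulA_row_row (T : Type) (A B : mx R) (C : nat -> T -> R) :
  row_finite A -> row_finite B -> mxmul (mxmul A B) C = mxmul A (mxmul B C).
Proof.
move=> [fA A0] [fB B0]; apply/funext => i; apply/funext => j.
apply: (@mxmulA_bounded _ _ _ _ _ _ (fA i) (\max_(l < fA i) fB l)).
move=> l k /orP[/(A0 i) ->|le_k]; first by rewrite !mul0r.
have [lt_l|/(A0 i) ->] := ltnP l (fA i); last by rewrite !mul0r.
by rewrite B0 ?mulr0 ?mul0r // (leq_trans (leq_bigmax_ord _ lt_l)).
Qed.

Lemma mxmulA_col_col (T : Type) (A B : mx R) (C : nat -> T -> R) :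
  col_finite B -> col_finite C -> mxmul (mxmul A B) C = mxmul A (mxmul B C).
Proof.
move=> [fB B0] [fC C0]; apply/funext => i; apply/funext => j.
apply: (@mxmulA_bounded _ _ _ _ _ _ (\max_(k < fC j) fB k) (fC j)).
move=> l k /orP[le_l|/C0 ->]; last by rewrite mulr0.
have [lt_k|/C0 ->] := ltnP k (fC j); last by rewrite mulr0.
by rewrite B0 ?mulr0 ?mul0r // (leq_trans (leq_bigmax_ord _ lt_k)).
Qed.

Lemma row_finite_mxmul (A B : mx R) : row_finite A -> row_finite B -> row_finite (mxmul A B).
Proof.
move=> [fA A0] [fB B0]; exists (fun i => \max_(l < fA i) fB l) => i k le_k.
apply: fsbig1 => l _; have [lt_l|/A0 ->] := ltnP l (fA i); last by rewrite mul0r.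
by rewrite B0 ?mulr0 // (leq_trans (leq_bigmax_ord _ lt_l)).
Qed.

Lemma mxmulx1 (A : mx R) : mxmul A (idmx R) = A.
Proof.
apply/funext => i; apply/funext => j; rewrite /mxmul (@fsum_nat1 _ _ j).
  by rewrite /idmx eqxx mulr1.
by move=> k /negbTE k_j; rewrite /idmx k_j mulr0.
Qed.

Lemma mxmul1x (T : Type) (A : nat -> T -> R) : mxmul (idmx R) A = A.
Proof.
apply/funext => i; apply/funext => j; rewrite /mxmul (@fsum_nat1 _ _ i).
  by rewrite /idmx eqxx mul1r.
by move=> k /negbTE k_i; rewrite /idmx eq_sym k_i mul0r.
Qed.

Lemma trm_mxmul (A B : mx R) : trm (mxmul A B) = mxmul (trm B) (trm A).
Proof.
apply/funext => i; apply/funext => j; rewrite /trm /mxmul.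
by apply: eq_fsbigr => k _; rewrite mulrC.
Qed.

Lemma trm_idmx : trm (idmx R) = idmx R.
Proof. by apply/funext => i; apply/funext => j; rewrite /trm /idmx eq_sym. Qed.

Lemma trm_mxmul_eq1 (A B : mx R) :
  mxmul B A = idmx R -> mxmul (trm A) (trm B) = idmx R.
Proof. by move=> BA; rewrite -trm_mxmul BA trm_idmx. Qed.

Lemma mxmul_zmul_subs (A : mx R) (v : svec R) (c : vec R) N :
  col_finite v -> (forall l, (N <= l)%N -> c l = 0) ->
  mxmul A (subs (zmul v) (cstv c)) = subs (zmul (mxmul A v)) (cstv (mvr A c)).
Proof.
move=> [fv v0] c0; apply/funext => i; apply/funext => m.
rewrite /mxmul /subs /zmul /cstv /mvr; set M := maxn (fv (m - 1)) N.
have v0M l : (M <= l)%N -> v l (m - 1) = 0.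
  by move=> le_l; rewrite v0 // (leq_trans _ le_l) ?leq_maxl.
have c0M l : (M <= l)%N -> c l = 0.
  by move=> le_l; rewrite c0 // (leq_trans _ le_l) ?leq_maxr.
rewrite (@fsum_nat_ord _ _ M) => [|l le_l]; last first.
  by rewrite v0M // c0M //; case: (m == 0); rewrite subrr mulr0.
rewrite (@fsum_nat_ord _ _ M) => [|l le_l]; last by rewrite v0M ?mulr0.
case: (m == 0); last by rewrite subr0; apply: eq_bigr => l _; rewrite subr0.
rewrite (@fsum_nat_ord _ _ M) => [|l le_l]; last by rewrite c0M ?mulr0.
by rewrite -sumrB; apply: eq_bigr => l _; rewrite mulrBr.
Qed.

Lemma conj_mxmul_row (T : Type) (P Pinv Y : mx R) (v w : nat -> T -> R) :
  row_finite P -> row_finite Pinv -> row_finite Y -> col_finite v ->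
  mxmul Pinv P = idmx R -> mxmul Y v = w ->
  mxmul (mxmul (mxmul P Y) Pinv) (mxmul P v) = mxmul P w.
Proof.
move=> P_row Pinv_row Y_row v_col PinvP Yv.
have PY_row := row_finite_mxmul P_row Y_row.
rewrite -(mxmulA_row_col P (row_finite_mxmul PY_row Pinv_row) v_col).
rewrite (mxmulA_row_row P PY_row Pinv_row) PinvP mxmulx1.
by rewrite (mxmulA_row_row v P_row Y_row) Yv.
Qed.

Lemma conj_mxmul_col (T : Type) (P Pinv Z : mx R) (v w : nat -> T -> R) :
  row_finite (mxmul (mxmul P Z) Pinv) -> col_finite P -> col_finite Pinv ->
  col_finite Z -> col_finite v -> mxmul Pinv P = idmx R -> mxmul Z v = w ->
  mxmul (mxmul (mxmul P Z) Pinv) (mxmul P v) = mxmul P w.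
Proof.
move=> conj_row P_col Pinv_col Z_col v_col PinvP Zv.
rewrite -(mxmulA_row_col P conj_row v_col) (mxmulA_col_col _ Pinv_col P_col).
by rewrite PinvP mxmulx1 (mxmulA_col_col _ Z_col v_col) Zv.
Qed.

Lemma conj_mxmul_col_zmul (P Pinv Z : mx R) (v : svec R) (c : vec R) N :
  row_finite (mxmul (mxmul P Z) Pinv) -> col_finite P -> col_finite Pinv ->
  col_finite Z -> col_finite v -> (forall l, (N <= l)%N -> c l = 0) ->
  mxmul Pinv P = idmx R -> mxmul Z v = subs (zmul v) (cstv c) ->
  mxmul (mxmul (mxmul P Z) Pinv) (mxmul P v) = subs (zmul (mxmul P v)) (cstv (mvr P c)).
Proof.
move=> conj_row P_col Pinv_col Z_col v_col c0 PinvP Zv.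
by rewrite -(mxmul_zmul_subs P v_col c0); apply: conj_mxmul_col.
Qed.

Lemma conj_mxmul_intertwine (P Pinv Q Qinv Y Z : mx R) :
  row_finite P -> row_finite Pinv -> row_finite Y ->
  col_finite Q -> col_finite Qinv -> col_finite Z ->
  mxmul P Pinv = idmx R -> mxmul Q Qinv = idmx R ->
  mxmul Y (mxmul Pinv Q) = mxmul (mxmul Pinv Q) Z ->
  mxmul (mxmul P Y) Pinv = mxmul (mxmul Q Z) Qinv.
Proof.
move=> P_row Pinv_row Y_row Q_col Qinv_col Z_col PPinv QQinv YZ.
have PY_row := row_finite_mxmul P_row Y_row.
rewrite -[LHS]mxmulx1 -QQinv.
rewrite -(mxmulA_row_col _ (row_finite_mxmul PY_row Pinv_row) Qinv_col).
rewrite (mxmulA_row_col _ PY_row Q_col) (mxmulA_row_row _ P_row Y_row) YZ.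
rewrite -(mxmulA_row_col _ P_row Z_col) -(mxmulA_row_col _ P_row Q_col).
by rewrite PPinv mxmul1x.
Qed.

Lemma trm_conj_row (P Pinv Y : mx R) : row_finite P -> row_finite Y ->
  trm (mxmul (mxmul P Y) Pinv) = mxmul (mxmul (trm Pinv) (trm Y)) (trm P).
Proof.
move=> P_row Y_row.
by rewrite !trm_mxmul (mxmulA_col_col _ (col_finite_trm Y_row) (col_finite_trm P_row)).
Qed.

Lemma trm_conj_col (Q Qinv Z : mx R) : col_finite Qinv -> col_finite Z ->
  trm (mxmul (mxmul Q Z) Qinv) = mxmul (mxmul (trm Qinv) (trm Z)) (trm Q).
Proof.
move=> Qinv_col Z_col.
by rewrite !trm_mxmul (mxmulA_row_row _ (row_finite_trm Qinv_col) (row_finite_trm Z_col)).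
Qed.

End SemiInfiniteProducts.

Lemma eq_subr1_Posz (m : int) (k : nat) : (m - 1 == Posz k) = (m == Posz k.+1).
Proof. by apply/eqP/eqP; lia. Qed.

Lemma eq_subr1_oppz (m : int) (k : nat) : (m - 1 == - Posz k.+1) = (m == - Posz k).
Proof. by apply/eqP/eqP; lia. Qed.

Section Shift.
Variables (R : realType) (n : seq nat).
Hypothesis n_composition : composition n.
Local Notation aidx_lt := (aidx_lt n_composition).
Local Notation aidx_epos := (aidx_epos n_composition).
Local Notation eq_epos := (eq_epos n_composition).
Local Notation kidx_epos := (kidx_epos n_composition).
Local Notation epos_idx := (epos_idx n_composition).
Local Notation aidx_esucc := (aidx_esucc n_composition).
Local Notation kidx_esucc := (kidx_esucc n_composition).

Lemma Upsilon_esucc i j : Upsilon R n i j = (j == esucc n i)%:R.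
Proof.
rewrite /Upsilon (bigD1 (Ordinal (aidx_lt i))) //= big1 ?addr0; last first.
  move=> a a_i; rewrite /Lambda; case: eqP => //= ai_a; move: a_i.
  by rewrite -val_eqE /= ai_a eqxx.
by rewrite /Lambda eqxx /= /esucc eq_epos ?aidx_lt //; case: (_ && _).
Qed.

Lemma row_finite_Upsilon : row_finite (Upsilon R n).
Proof.
exists (fun i => (esucc n i).+1) => i l lt_l; rewrite Upsilon_esucc.
by case: eqP lt_l => // ->; rewrite ltnn.
Qed.

Lemma Upsilon_chi a : mxmul (Upsilon R n) (chi R n a) = zmul (chi R n a).
Proof.
apply/funext => i; apply/funext => m; rewrite /mxmul (@fsum_nat1 _ _ (esucc n i)).
  by rewrite Upsilon_esucc eqxx mul1r /zmul /chi aidx_esucc kidx_esucc eq_subr1_Posz.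
by move=> k /negbTE k_i; rewrite Upsilon_esucc k_i mul0r.
Qed.

Lemma trm_Upsilon_chistar b :
  mxmul (trm (Upsilon R n)) (chistar R n b) = subs (zmul (chistar R n b)) (cstv (e0 R n b)).
Proof.
apply/funext => i; apply/funext => m.
rewrite /mxmul /trm /subs /zmul /cstv /chistar /e0.
have Ups_i l : Upsilon R n l i = (i == esucc n l)%:R by apply: Upsilon_esucc.
case ki: (kidx n i) => [|k].
  rewrite fsbig1 => [|l _]; last first.
    rewrite Ups_i; case: eqP => [i_l|_]; last by rewrite mul0r.
    by rewrite i_l kidx_esucc in ki.
  by rewrite eq_subr1_oppz /=; case: (_ == b); case: (m == 0); rewrite subrr.
have i_succ : i = esucc n (epos n (aidx n i) k).
  by rewrite /esucc aidx_epos ?aidx_lt // kidx_epos ?aidx_lt // -ki epos_idx.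
rewrite (@fsum_nat1 _ _ (epos n (aidx n i) k)) => [|l l_k]; last first.
  rewrite Ups_i; case: eqP => [i_l|_]; last by rewrite mul0r.
  case/negP: l_k; move: ki; rewrite i_l aidx_esucc kidx_esucc => -[<-].
  by rewrite epos_idx.
rewrite Ups_i -i_succ eqxx mul1r aidx_epos ?aidx_lt // kidx_epos ?aidx_lt //.
rewrite eq_subr1_oppz.
by case: (m == 0); rewrite ?andbF ?subr0.
Qed.

Lemma col_finite_chi a : col_finite (chi R n a).
Proof.
exists (fun m => (epos n a `|m|%N).+1) => k m; rewrite /chi.
case: ifP => // /andP[/eqP <- /eqP ->]; by rewrite epos_idx ltnn.
Qed.

Lemma col_finite_chistar a : col_finite (chistar R n a).
Proof.
exists (fun m => (epos n a `|m|%N.-1).+1) => k m; rewrite /chistar.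
case: ifP => // /andP[/eqP <- /eqP ->]; by rewrite abszN /= epos_idx ltnn.
Qed.

Lemma e0_eq0 a l : ((epos n a 0).+1 <= l)%N -> e0 R n a l = 0.
Proof.
rewrite /e0; case: ifP => // /andP[/eqP <- /eqP <-].
by rewrite epos_idx ltnn.
Qed.

End Shift.

Definition block_hankel (R : realType) (n1 n2 : seq nat) (g : mx R) :=
  exists G : nat -> nat -> nat -> R,
    forall i j, g i j = G (aidx n1 i) (aidx n2 j) (kidx n1 i + kidx n2 j)%N.

Lemma block_hankel_Upsilon (R : realType) (n1 n2 : seq nat) (g : mx R) :
  composition n1 -> composition n2 -> block_hankel n1 n2 g ->
  mxmul (Upsilon R n1) g = mxmul g (trm (Upsilon R n2)).
Proof.
move=> n1_comp n2_comp [G gE]; apply/funext => i; apply/funext => j.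
rewrite /mxmul (@fsum_nat1 _ _ (esucc n1 i)) => [|k /negbTE k_i]; last first.
  by rewrite Upsilon_esucc // k_i mul0r.
rewrite [RHS](@fsum_nat1 _ _ (esucc n2 j)) => [|k /negbTE k_j]; last first.
  by rewrite /trm Upsilon_esucc // k_j mulr0.
rewrite /trm !Upsilon_esucc // !eqxx mul1r mulr1 !gE.
by rewrite !aidx_esucc // !kidx_esucc // addSn addnS.
Qed.

Unset Implicit Arguments.
Set Strict Implicit.
Theorem proposition2p14 (R : realType)
  (mu : {finite_measure set R -> \bar R}) (I : interval R)
  (n1 n2 : seq nat) (w1 w2 : nat -> R -> R)
  (S Sinv Sb Sbinv : mx R) :
  composition n1 -> composition n2 ->
  (forall i j, mu.-integrable [set` I]
     (fun x => (x ^+ (kidx n1 i + kidx n2 j) * w1 (aidx n1 i) x * w2 (aidx n2 j) x)%:E)) ->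
  lower_unitriangular S -> lower_triangular Sinv ->
  mmul S Sinv = idmx R -> mmul Sinv S = idmx R ->
  upper_triangular Sb -> (forall i, Sb i i != 0) -> upper_triangular Sbinv ->
  mmul Sb Sbinv = idmx R -> mmul Sbinv Sb = idmx R ->
  (forall i j, Rintegral mu [set` I]
     (fun x => x ^+ (kidx n1 i + kidx n2 j) * w1 (aidx n1 i) x * w2 (aidx n2 j) x)
     = mmul Sinv Sb i j) ->
  let J := mmul (mmul S (Upsilon R n1)) Sinv in
  J = mmul (mmul Sb (trm (Upsilon R n2))) Sbinv /\
  (forall a, (a < size n1)%N ->
     mvs J (mvs S (chi R n1 a)) = zmul (mvs S (chi R n1 a))) /\
  (forall b, (b < size n2)%N ->
     mvs (trm J) (mvs (trm Sbinv) (chi R n2 b)) = zmul (mvs (trm Sbinv) (chi R n2 b))) /\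
  (forall b, (b < size n2)%N ->
     mvs J (mvs Sb (chistar R n2 b))
     = subs (zmul (mvs Sb (chistar R n2 b))) (cstv (mvr Sb (e0 R n2 b)))) /\
  (forall a, (a < size n1)%N ->
     mvs (trm J) (mvs (trm Sinv) (chistar R n1 a))
     = subs (zmul (mvs (trm Sinv) (chistar R n1 a))) (cstv (mvr (trm Sinv) (e0 R n1 a)))).
Proof.
move=> n1_comp n2_comp _ [S_low _] Sinv_low SSinv SinvS Sb_up _ Sbinv_up SbSbinv SbinvSb.
move=> g_moments J.
have S_row := lower_triangular_row_finite S_low.
have Sinv_row := lower_triangular_row_finite Sinv_low.
have Sb_col := upper_triangular_col_finite Sb_up.
have Sbinv_col := upper_triangular_col_finite Sbinv_up.
have Ups1_row := row_finite_Upsilon R n1_comp.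
have Ups2_col := col_finite_trm (row_finite_Upsilon R n2_comp).
have g_hankel : block_hankel n1 n2 (mmul Sinv Sb).
  exists (fun a b k => Rintegral mu [set` I] (fun x => x ^+ k * w1 a x * w2 b x)).
  by move=> i j; rewrite -g_moments.
have J_dual : J = mxmul (mxmul Sb (trm (Upsilon R n2))) Sbinv.
  exact: conj_mxmul_intertwine (block_hankel_Upsilon n1_comp n2_comp g_hankel).
have J_row : row_finite J := row_finite_mxmul (row_finite_mxmul S_row Ups1_row) Sinv_row.
have trJ_row : row_finite (trm J).
  rewrite J_dual trm_conj_col //; apply: row_finite_mxmul (row_finite_trm Sb_col).
  exact: row_finite_mxmul (row_finite_trm Sbinv_col) (row_finite_trm Ups2_col).
split; first exact: J_dual.
split=> [a _|].
  exact: conj_mxmul_row S_row Sinv_row Ups1_row (col_finite_chi R n1_comp a) SinvS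
    (Upsilon_chi R n1_comp a).
split=> [b _|].
  rewrite J_dual trm_conj_col //.
  exact: conj_mxmul_row (row_finite_trm Sbinv_col) (row_finite_trm Sb_col)
    (row_finite_trm Ups2_col) (col_finite_chi R n2_comp b) (trm_mxmul_eq1 SbinvSb)
    (Upsilon_chi R n2_comp b).
split=> [b _|a _].
  rewrite J_dual in J_row *.
  exact: conj_mxmul_col_zmul J_row Sb_col Sbinv_col Ups2_col (col_finite_chistar R n2_comp b)
    (@e0_eq0 R n2 n2_comp b) SbinvSb (trm_Upsilon_chistar R n2_comp b).
rewrite /J trm_conj_row // in trJ_row *.
exact: conj_mxmul_col_zmul trJ_row (col_finite_trm Sinv_row) (col_finite_trm S_row)
  (col_finite_trm Ups1_row) (col_finite_chistar R n1_comp a)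
  (@e0_eq0 R n1 n1_comp a) (trm_mxmul_eq1 SinvS) (trm_Upsilon_chistar R n1_comp a).
Qed.
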